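(* Let $a,b\in\mathbb{Z}$ with $\gcd(a,b)=1$, and let $t$ be a positive integer. Then $$\#\{(x,y)\in \mathbb Z^2:\ ax+by\in [1,t(a^2+b^2)-1] \text{ and } ay-bx \in [1,t(a^2+b^2)-1] \}=(a^2+b^2)t^2-2t+1.$$
   Context: Here $[m,M]$ denotes the closed real interval, so the conditions say $1\le ax+by\le t(a^2+b^2)-1$ and $1\le ay-bx\le t(a^2+b^2)-1$. *)

From HB Require Import structures.
From mathcomp Require Import all_boot all_order all_algebra.
Set Implicit Arguments. Unset Strict Implicit. Unset Printing Implicit Defensive.
Import Order.TTheory GRing.Theory Num.Theory.
Local Open Scope ring_scope.

Definition in_box (a b t : int) (p : int * int) : Prop :=
  let x := p.1 in let y := p.2 in
  (1 <= a * x + b * y <= t * (a ^+ 2 + b ^+ 2) - 1) /\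
  (1 <= a * y - b * x <= t * (a ^+ 2 + b ^+ 2) - 1).

Definition has_card (P : int * int -> Prop) (n : nat) : Prop :=
  exists s : seq (int * int), uniq s /\ (forall p, p \in s <-> P p) /\ size s = n.

From HB Require Import structures.
From mathcomp Require Import all_boot all_order all_algebra.
From mathcomp Require Import zify ring.
Import Order.TTheory GRing.Theory Num.Theory.
Local Open Scope ring_scope.

(* The rotation (x, y) |-> (u, v) = (a x + b y, a y - b x) is injective, and
   with N = a^2 + b^2 its image is the set of (u, v) with
   N | a u - b v and N | b u + a v.  When gcd(a, b) = 1 these two conditions
   amount to the single congruence v = k u (mod N) for a unit k mod N.
   So we count pairs (u, v) in [1, tN - 1]^2 with v = k u (mod N): for each u
   exactly t values of v in [0, tN - 1] satisfy it, and v = 0 is among them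
   exactly when N | u, which happens for t - 1 values of u.  This gives
   (tN - 1) t - (t - 1) = N t^2 - 2t + 1. *)

Lemma count_modn_iota (N r c : nat) : (r < N)%N ->
  count (fun i => i %% N == r)%N (iota c N) = 1%N.
Proof.
move=> ltrN; elim: c => [|c IHc].
  rewrite (@eq_in_count _ _ (pred1 r)); last first.
    by move=> i; rewrite mem_iota add0n => /andP[_ ltiN] /=; rewrite modn_small.
  by rewrite count_uniq_mem ?iota_uniq // mem_iota add0n ltrN.
have N_gt0 : (0 < N)%N by case: N ltrN {IHc}.
have iota_head : iota c N = c :: iota c.+1 N.-1 by rewrite -{1}(prednK N_gt0).
have iota_last : iota c.+1 N = iota c.+1 N.-1 ++ [:: c + N].
  by rewrite -{1}(prednK N_gt0) -[N.-1.+1]addn1 iotaD addSnnS prednK.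
by move: IHc; rewrite iota_head iota_last count_cat /= modnDr addn0 addnC.
Qed.

Lemma count_dvdz_iota (N c : nat) (w : int) : (0 < N)%N ->
  count (fun i : nat => (N%:Z %| i%:Z - w)%Z) (iota c N) = 1%N.
Proof.
move=> N_gt0.
have wN_ge0 : 0 <= (w %% N)%Z by apply: modz_ge0; rewrite eqz_nat -lt0n.
have wN_lt : (w %% N)%Z < N by apply: ltz_pmod; rewrite ltz_nat.
rewrite -(@count_modn_iota N `|(w %% N)%Z|%N c); last by rewrite -ltz_nat gez0_abs.
apply: eq_count => i /=.
by rewrite -eqz_mod_dvd modz_nat -eqz_nat gez0_abs.
Qed.

Lemma count_dvdz_iota_mul (N t : nat) (w : int) : (0 < N)%N ->
  count (fun i : nat => (N%:Z %| i%:Z - w)%Z) (iota 0 (t * N)) = t.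
Proof.
move=> N_gt0; elim: t => [|t IHt]; first by rewrite mul0n.
by rewrite mulSnr iotaD count_cat IHt count_dvdz_iota // addn1.
Qed.

Definition interior_ints (n : nat) : seq int := [seq Posz i | i <- iota 1 n.-1].

Lemma mem_interior_ints (n : nat) (z : int) :
  (z \in interior_ints n) = (1 <= z <= n%:Z - 1).
Proof.
case: z => [m|m]; last by apply/negbTE/mapP => -[].
rewrite mem_map; last by move=> ? ? [].
by rewrite mem_iota; apply/idP/idP => /andP[? ?]; apply/andP; split; lia.
Qed.

Lemma interior_ints_uniq (n : nat) : uniq (interior_ints n).
Proof. by rewrite map_inj_uniq ?iota_uniq // => ? ? []. Qed.

Lemma size_interior_ints (n : nat) : size (interior_ints n) = n.-1.
Proof. by rewrite size_map size_iota. Qed.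

Lemma count_dvdz_interior_ints (N t : nat) (w : int) : (0 < N)%N -> (0 < t)%N ->
  (count (fun v : int => (N%:Z %| (v - w)%R)%Z) (interior_ints (t * N))
   + (N%:Z %| w)%Z = t)%N.
Proof.
move=> N_gt0 t_gt0; rewrite count_map -[in RHS](@count_dvdz_iota_mul N t w N_gt0).
have tN_gt0 : (0 < t * N)%N by rewrite muln_gt0 t_gt0.
rewrite -{2}(prednK tN_gt0) /= addnC; congr (_ + _)%N.
by rewrite sub0r rpredN.
Qed.

Lemma sumn_map_add_count (T : Type) (s : seq T) (t : nat) (P : pred T) (f : T -> nat) :
  (forall x, f x + P x = t)%N -> (sumn (map f s) + count P s = size s * t)%N.
Proof.
move=> fP; elim: s => [|x s IHs] //=.
by rewrite mulSn -IHs -(fP x); lia.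
Qed.

Lemma has_card_preimage {T : eqType} {g : int * int -> T} {f : T -> int * int}
    {s : seq T} {P : int * int -> Prop} (s_uniq : uniq s) (gK : cancel g f)
    (fK : {in s, cancel f g}) (Pg : forall p, P p <-> g p \in s) :
  has_card P (size s).
Proof.
exists (map f s); split; last split; last exact: size_map.
  by rewrite (map_inj_in_uniq (can_in_inj fK)).
move=> p; rewrite Pg; apply: iff_sym; split => [gps | /mapP[q qs ->]].
  by rewrite -(gK p); apply: map_f.
by rewrite fK.
Qed.

Section Rotation.

Variables a b : int.

Definition rot (p : int * int) : int * int := (a * p.1 + b * p.2, a * p.2 - b * p.1).

Definition unrot (p : int * int) : int * int :=
  ((a * p.1 - b * p.2) %/ (a ^+ 2 + b ^+ 2), (b * p.1 + a * p.2) %/ (a ^+ 2 + b ^+ 2))%Z.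

Hypothesis norm_neq0 : a ^+ 2 + b ^+ 2 != 0.

Lemma rotK : cancel rot unrot.
Proof.
by move=> [x y]; congr (_, _); rewrite /= -[RHS](mulzK _ norm_neq0); congr (_ %/ _)%Z; ring.
Qed.

Lemma unrotK (u v : int) :
  (a ^+ 2 + b ^+ 2 %| a * u - b * v)%Z -> (a ^+ 2 + b ^+ 2 %| b * u + a * v)%Z ->
  rot (unrot (u, v)) = (u, v).
Proof.
move=> /divzK Ex /divzK Ey; rewrite /rot /unrot /=.
set x := ((a * u - b * v) %/ _)%Z in Ex *; set y := ((b * u + a * v) %/ _)%Z in Ey *.
congr (_, _); apply: (mulIf norm_neq0).
  transitivity (a * (x * (a ^+ 2 + b ^+ 2)) + b * (y * (a ^+ 2 + b ^+ 2))); first ring.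
  by rewrite Ex Ey; ring.
transitivity (a * (y * (a ^+ 2 + b ^+ 2)) - b * (x * (a ^+ 2 + b ^+ 2))); first ring.
by rewrite Ex Ey; ring.
Qed.

Lemma dvdz_rot (p : int * int) :
  (a ^+ 2 + b ^+ 2 %| a * (rot p).1 - b * (rot p).2)%Z &&
  (a ^+ 2 + b ^+ 2 %| b * (rot p).1 + a * (rot p).2)%Z.
Proof. by apply/andP; split; apply/dvdzP; [exists p.1 | exists p.2]; rewrite /=; ring. Qed.

End Rotation.

Section Congruence.

Variables a b p q : int.
Hypothesis bezout : p * a + q * b = 1.

(* Modulo [a^2 + b^2], [b (a q - b p) = a (p a + q b) = a]: [a q - b p] stands for [a / b]. *)
Lemma dvdz_rot_pairE (u v : int) :
  ((a ^+ 2 + b ^+ 2 %| a * u - b * v)%Z && (a ^+ 2 + b ^+ 2 %| b * u + a * v)%Z) =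
  (a ^+ 2 + b ^+ 2 %| v - u * (a * q - b * p))%Z.
Proof.
apply/idP/idP.
  case/andP => /dvdzP[m1 E1] /dvdzP[m2 E2]; apply/dvdzP; exists (p * m2 - q * m1).
  have -> : v - u * (a * q - b * p) = v * (p * a + q * b) - u * (a * q - b * p).
    by rewrite bezout mulr1.
  have -> : (p * m2 - q * m1) * (a ^+ 2 + b ^+ 2) =
            p * (m2 * (a ^+ 2 + b ^+ 2)) - q * (m1 * (a ^+ 2 + b ^+ 2)) by ring.
  by rewrite -E1 -E2; ring.
case/dvdzP=> m E.
have Ev : v = u * (a * q - b * p) + m * (a ^+ 2 + b ^+ 2) by rewrite -E; ring.
apply/andP; split; apply/dvdzP.
  exists (u * p - b * m).
  have -> : a * u - b * v =
      (u * p - b * m) * (a ^+ 2 + b ^+ 2) + u * a * (1 - (p * a + q * b)) by rewrite Ev; ring.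
  by rewrite bezout subrr mulr0 addr0.
exists (u * q + a * m).
have -> : b * u + a * v =
    (u * q + a * m) * (a ^+ 2 + b ^+ 2) + u * b * (1 - (p * a + q * b)) by rewrite Ev; ring.
by rewrite bezout subrr mulr0 addr0.
Qed.

(* Lagrange's identity [(p a + q b)^2 + (a q - b p)^2 = (p^2 + q^2) (a^2 + b^2)]
   makes [(a q - b p)^2 = -1] modulo [a^2 + b^2]. *)
Lemma dvdz_mul_rot_unit (u : int) :
  (a ^+ 2 + b ^+ 2 %| u * (a * q - b * p))%Z = (a ^+ 2 + b ^+ 2 %| u)%Z.
Proof.
apply/idP/idP; last by move=> /dvdzP[m ->]; apply/dvdzP; exists (m * (a * q - b * p)); ring.
case/dvdzP=> m E; apply/dvdzP; exists (u * (p ^+ 2 + q ^+ 2) - m * (a * q - b * p)).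
have -> : (u * (p ^+ 2 + q ^+ 2) - m * (a * q - b * p)) * (a ^+ 2 + b ^+ 2) =
   u * (p ^+ 2 + q ^+ 2) * (a ^+ 2 + b ^+ 2) - m * (a ^+ 2 + b ^+ 2) * (a * q - b * p) by ring.
rewrite -E; transitivity (u * (p * a + q * b) ^+ 2); first by rewrite bezout expr1n mulr1.
ring.
Qed.

End Congruence.

Definition congruent_pairs (N t : nat) (k : int) : seq (int * int) :=
  [seq (u, v) | u <- interior_ints (t * N),
                v <- [seq v <- interior_ints (t * N) | (N%:Z %| (v - u * k)%R)%Z]].

Lemma mem_congruent_pairs (N t : nat) (k u v : int) :
  ((u, v) \in congruent_pairs N t k) =
  [&& u \in interior_ints (t * N), v \in interior_ints (t * N) & (N%:Z %| (v - u * k)%R)%Z].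
Proof.
apply/allpairsPdep/and3P => [[x [y [xI]]] | [uI vI dv]].
  by rewrite mem_filter => /andP[dv yI] [-> ->].
by exists u, v; rewrite mem_filter dv.
Qed.

Lemma congruent_pairs_uniq (N t : nat) (k : int) : uniq (congruent_pairs N t k).
Proof.
apply: allpairs_uniq_dep => [| u _ | [? ?] [? ?] _ _ /= [-> ->]] //.
  exact: interior_ints_uniq.
by rewrite filter_uniq // interior_ints_uniq.
Qed.

Lemma size_congruent_pairs (N t : nat) (k : int) : (0 < N)%N -> (0 < t)%N ->
  (forall u, (N%:Z %| u * k)%Z = (N%:Z %| u)%Z) ->
  (size (congruent_pairs N t k))%:Z = N%:Z * t%:Z ^+ 2 - 2 * t%:Z + 1.
Proof.
move=> N_gt0 t_gt0 k_unit; rewrite size_allpairs_dep.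
have multiples : (count (fun u => (N%:Z %| u)%Z) (interior_ints (t * N)) + 1 = t)%N.
  rewrite -[RHS](@count_dvdz_interior_ints N t 0 N_gt0 t_gt0) dvdz0.
  by congr (_ + _)%N; apply: eq_count => u; rewrite /= subr0.
have rows : (sumn [seq size [seq v <- interior_ints (t * N) | (N%:Z %| (v - u * k)%R)%Z]
                  | u <- interior_ints (t * N)]
             + count (fun u => (N%:Z %| u)%Z) (interior_ints (t * N)) = (t * N).-1 * t)%N.
  rewrite -size_interior_ints; apply: sumn_map_add_count => u.
  by rewrite size_filter -k_unit count_dvdz_interior_ints.
have tN_pred : ((t * N).-1 + 1 = t * N)%N by rewrite addn1 prednK // muln_gt0 t_gt0.
move: rows multiples tN_pred; set rows := sumn _; set c := count _ _.
nia.
Qed.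

Theorem proposition2p1 (a b t : int) :
  gcdz a b = 1%N -> 0 < t ->
  exists n : nat,
    has_card (in_box a b t) n /\
    (n%:Z = (a ^+ 2 + b ^+ 2) * t ^+ 2 - 2 * t + 1).
Proof.
move=> coprime_ab; case: t => [t t_gt0|//].
have [p [q bezout]] := Bezoutz a b; rewrite coprime_ab in bezout.
have norm_neq0 : a ^+ 2 + b ^+ 2 != 0.
  rewrite paddr_eq0 ?sqr_ge0 // !sqrf_eq0; apply/negP => /andP[/eqP a0 /eqP b0].
  by move: coprime_ab; rewrite a0 b0 gcdz0.
have [N normE] : exists N : nat, a ^+ 2 + b ^+ 2 = N%:Z.
  by exists (absz (a ^+ 2 + b ^+ 2)); rewrite gez0_abs // addr_ge0 ?sqr_ge0.
have N_gt0 : (0 < N)%N by rewrite lt0n -eqz_nat -normE.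
pose S := congruent_pairs N t (a * q - b * p).
exists (size S); split.
  apply: (has_card_preimage (congruent_pairs_uniq _ _ _) (rotK _ _ norm_neq0)) => [[u v] | [x y]].
  - rewrite mem_congruent_pairs -normE -(dvdz_rot_pairE _ _ _ _ bezout).
    by case/and3P => _ _ /andP[]; apply: unrotK.
  - rewrite mem_congruent_pairs -normE -(dvdz_rot_pairE _ _ _ _ bezout) dvdz_rot andbT.
    by rewrite !mem_interior_ints PoszM -normE /in_box; split => /andP.
rewrite normE size_congruent_pairs // => u.
by rewrite -normE (dvdz_mul_rot_unit _ _ _ _ bezout).
Qed.
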